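(* Let $R$ be a semi-graded ring, let $f:N\to M$ be a homogeneous homomorphism of semi-graded $R$-modules, and let $X\subseteq N$. Then $f(\langle X\rangle^{\mathsf{SG}})=\langle f(X)\rangle^{\mathsf{SG}}$.
   Context: Rings are associative with $1$; modules are left modules. A ring $R$ is semi-graded (SG) if there are additive subgroups $R_n$ ($n\in\mathbb{Z}$) with $R=\bigoplus_n R_n$, $R_mR_n\subseteq\bigoplus_{k\le m+n}R_k$, and $1\in R_0$. An $R$-module $M$ is SG if $M=\bigoplus_nM_n$ (additive subgroups) with $R_mM_n\subseteq\bigoplus_{k\le m+n}M_k$ for $m\ge0$, $n\in\mathbb{Z}$. A homomorphism $f:N\to M$ of SG modules is homogeneous if $f(N_n)\subseteq M_n$ for all $n$. A submodule $N'$ of an SG module $N$ is an SG submodule if $N'=\bigoplus_n(N'\cap N_n)$. For a subset $X$ of an SG module, $\langle X\rangle^{\mathsf{SG}}$ is the intersection of all SG submodules containing $X$. *)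

From HB Require Import structures.
From mathcomp Require Import all_boot all_order all_algebra.
Set Implicit Arguments. Unset Strict Implicit. Unset Printing Implicit Defensive.
Import Order.TTheory GRing.Theory Num.Theory.
Local Open Scope ring_scope.

Definition pset (T : Type) := T -> Prop.

Definition is_addsubgroup (V : zmodType) (S : pset V) : Prop :=
  S 0 /\ (forall x y, S x -> S y -> S (x - y)).

Definition is_direct_sum (V : zmodType) (S : pset V) (F : int -> pset V) : Prop :=
  (forall n, is_addsubgroup (F n)) /\
  (forall x, S x <-> exists (s : seq int) (y : int -> V),
      (forall k, k \in s -> F k (y k)) /\ x = \sum_(k <- s) y k) /\
  (forall (s : seq int) (y : int -> V), uniq s ->
      (forall k, k \in s -> F k (y k)) -> \sum_(k <- s) y k = 0 ->
      forall k, k \in s -> y k = 0).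

Definition in_sum_le (V : zmodType) (F : int -> pset V) (m : int) (x : V) : Prop :=
  exists (s : seq int) (y : int -> V),
    (forall k, k \in s -> (k <= m) /\ F k (y k)) /\ x = \sum_(k <- s) y k.

Definition is_SG_ring (R : pzRingType) (RG : int -> pset R) : Prop :=
  is_direct_sum (fun _ => True) RG /\
  (forall m n a b, RG m a -> RG n b -> in_sum_le RG (m + n) (a * b)) /\
  RG 0 1.

Definition is_SG_module (R : pzRingType) (RG : int -> pset R) (M : lmodType R)
  (MG : int -> pset M) : Prop :=
  is_direct_sum (fun _ => True) MG /\
  (forall (m n : int) a x, 0 <= m -> RG m a -> MG n x -> in_sum_le MG (m + n) (a *: x)).

Definition homogeneous (R : pzRingType) (N M : lmodType R)
  (NG : int -> pset N) (MG : int -> pset M) (f : N -> M) : Prop :=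
  forall n x, NG n x -> MG n (f x).

Definition is_submodule (R : pzRingType) (M : lmodType R) (S : pset M) : Prop :=
  S 0 /\ (forall x y, S x -> S y -> S (x - y)) /\ (forall a x, S x -> S (a *: x)).

Definition is_SG_submodule (R : pzRingType) (M : lmodType R) (MG : int -> pset M)
  (S : pset M) : Prop :=
  is_submodule S /\ is_direct_sum S (fun n x => S x /\ MG n x).

Definition SG_span (R : pzRingType) (M : lmodType R) (MG : int -> pset M)
  (X : pset M) : pset M :=
  fun x => forall S, is_SG_submodule MG S -> (forall y, X y -> S y) -> S x.

Definition pimage (A B : Type) (f : A -> B) (X : pset A) : pset B :=
  fun y => exists2 x, X x & y = f x.

From HB Require Import structures.
From mathcomp Require Import all_boot all_order all_algebra.
From Stdlib Require Import FunctionalExtensionality PropExtensionality.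
Set Implicit Arguments. Unset Strict Implicit. Unset Printing Implicit Defensive.
Import GRing.Theory.
Local Open Scope ring_scope.

(* A submodule S is an SG submodule iff it contains the homogeneous
   components of each of its elements.  This closure property survives
   arbitrary intersections, so <X>^SG is itself the least SG submodule
   containing X.  It also survives preimages and images along a homogeneous
   linear map f: f sends a decomposition of x to one of f x, and homogeneous
   components are unique.  Hence f(<X>^SG) lies in every SG submodule
   containing f(X), and is itself such a submodule.  Only the direct sum
   decompositions of N and M matter. *)

Section HomogeneousComponents.
Variable V : zmodType.
Implicit Types (P S : pset V) (s t u : seq int) (y z : int -> V).

Lemma addsubgroupD P : is_addsubgroup P -> forall x x', P x -> P x' -> P (x + x').
Proof.
move=> [P0 PB] x x' Px Px'.
by have := PB x (0 - x') Px (PB _ _ P0 Px'); rewrite sub0r opprK.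
Qed.

Lemma addsubgroup_sum P (I : eqType) (r : seq I) (Q : pred I) (F : I -> V) :
  is_addsubgroup P -> (forall i, i \in r -> Q i -> P (F i)) ->
  P (\sum_(i <- r | Q i) F i).
Proof.
move=> HP HF; rewrite big_seq_cond.
apply: (@big_ind V P); [by case: HP | exact: addsubgroupD HP |].
by move=> i /andP[]; apply: HF.
Qed.

Lemma addsubgroupI P Q :
  is_addsubgroup P -> is_addsubgroup Q -> is_addsubgroup (fun x => P x /\ Q x).
Proof.
move=> [P0 PB] [Q0 QB]; split=> // x x' [Px Qx] [Px' Qx'].
by split; [apply: PB | apply: QB].
Qed.

Definition homogeneous_terms (G : int -> pset V) s y := forall j, j \in s -> G j (y j).

Definition hcomp s y (k : int) : V := \sum_(j <- s | j == k) y j.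

Lemma hcomp_notin s y k : k \notin s -> hcomp s y k = 0.
Proof. by move=> ks; apply: big1_seq => j /andP[/eqP-> ]; rewrite (negPf ks). Qed.

Lemma sum_hcomp_uniq u s y :
  uniq u -> {subset s <= u} -> \sum_(k <- u) hcomp s y k = \sum_(j <- s) y j.
Proof.
move=> uniq_u sub_su; rewrite /hcomp (exchange_big_dep predT) //=.
apply: eq_big_seq => j js; rewrite (eq_bigl (pred1 j)) => [|k]; last first.
  by rewrite /= eq_sym.
by rewrite -big_filter filter_pred1_uniq ?sub_su // big_seq1.
Qed.

Lemma sum_hcomp s y : \sum_(k <- undup s) hcomp s y k = \sum_(j <- s) y j.
Proof. by apply: sum_hcomp_uniq => [|k]; rewrite ?undup_uniq ?mem_undup. Qed.

Variable G : int -> pset V.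

Lemma hcomp_homogeneous s y k :
  (forall n, is_addsubgroup (G n)) -> homogeneous_terms G s y -> G k (hcomp s y k).
Proof. by move=> HG Hy; apply: addsubgroup_sum => // j js /eqP <-; apply: Hy. Qed.

Definition hcomp_closed S :=
  forall s y, homogeneous_terms G s y -> S (\sum_(j <- s) y j) ->
  forall k, S (hcomp s y k).

Hypothesis HG : is_direct_sum (fun _ => True) G.

Lemma graded_addsubgroup n : is_addsubgroup (G n).
Proof. by case: HG. Qed.

Lemma graded_decomposition x :
  exists s y, homogeneous_terms G s y /\ x = \sum_(j <- s) y j.
Proof. by case: HG => _ [dec _]; apply/dec. Qed.

Lemma eq_hcomp s y t z k :
  homogeneous_terms G s y -> homogeneous_terms G t z ->
  \sum_(j <- s) y j = \sum_(j <- t) z j -> hcomp s y k = hcomp t z k.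
Proof.
case: HG => HGn [_ free] Hy Hz eq_sum; set u := undup (s ++ t).
have [ku|ku] := boolP (k \in u); last first.
  by move: ku; rewrite mem_undup mem_cat negb_or => /andP[ks kt]; rewrite !hcomp_notin.
apply/eqP; rewrite -subr_eq0; apply/eqP.
apply: (free u (fun k => hcomp s y k - hcomp t z k)) => //; first exact: undup_uniq.
- move=> j _; case: (HGn j) => _; apply; exact: hcomp_homogeneous.
- rewrite sumrB !(@sum_hcomp_uniq u) ?undup_uniq ?eq_sum ?subrr //.
  all: by move=> j jr; rewrite mem_undup mem_cat jr ?orbT.
Qed.

Lemma direct_sum_hcomp_closed S :
  is_addsubgroup S -> is_direct_sum S (fun n x => S x /\ G n x) <-> hcomp_closed S.
Proof.
move=> HS; split.
  case=> _ [decS _] s y Hy Sx k.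
  have [t [z [Hz Ez]]] := (decS _).1 Sx.
  rewrite (@eq_hcomp s y t z) ?Ez //; last by move=> j /Hz[].
  by apply: addsubgroup_sum => // j /Hz[].
move=> closedS; split; [|split].
- by move=> n; apply: addsubgroupI HS (graded_addsubgroup n).
- move=> x; split=> [Sx|[s [y [Hy ->]]]]; last by apply: addsubgroup_sum => // j /Hy[].
  have [s [y [Hy Ex]]] := graded_decomposition x.
  exists (undup s), (hcomp s y); split; last by rewrite sum_hcomp.
  move=> k _; split; first by apply: closedS; rewrite -?Ex.
  exact: hcomp_homogeneous graded_addsubgroup Hy.
- by case: HG => _ [_ free] s y us Hy; apply: free => // k /Hy[].
Qed.

End HomogeneousComponents.

Section SGSubmodules.
Variables (R : pzRingType) (M : lmodType R) (MG : int -> pset M).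
Hypothesis HMG : is_direct_sum (fun _ => True) MG.

Lemma submodule_addsubgroup (S : pset M) : is_submodule S -> is_addsubgroup S.
Proof. by case=> S0 [SB _]. Qed.

Lemma is_SG_submoduleP (S : pset M) :
  is_SG_submodule MG S <-> is_submodule S /\ hcomp_closed MG S.
Proof.
split=> -[subS H]; split=> //.
all: exact/(direct_sum_hcomp_closed HMG (submodule_addsubgroup subS)).
Qed.

Lemma SG_span_SG_submodule (X : pset M) : is_SG_submodule MG (SG_span MG X).
Proof.
apply/is_SG_submoduleP; split; first split; [|split|].
- by move=> S [[S0 _] _].
- move=> x x' Hx Hx' S HS HX; have [[_ [SB _]] _] := HS.
  by apply: SB; [apply: Hx | apply: Hx'].
- by move=> a x Hx S HS HX; have [[_ [_ SZ]] _] := HS; apply: SZ; apply: Hx.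
- move=> s y Hy Hsum k S HS HX; have /is_SG_submoduleP[_ closedS] := HS.
  by apply: closedS => //; apply: Hsum.
Qed.

End SGSubmodules.

Section HomogeneousMaps.
Variables (R : pzRingType) (N M : lmodType R) (NG : int -> pset N) (MG : int -> pset M).
Variable f : {linear N -> M}.
Hypothesis HNG : is_direct_sum (fun _ => True) NG.
Hypothesis HMG : is_direct_sum (fun _ => True) MG.
Hypothesis homf : homogeneous NG MG f.

Lemma hcomp_linear s y k : f (hcomp s y k) = hcomp s (f \o y) k.
Proof. exact: raddf_sum. Qed.

Lemma homogeneous_terms_comp s y :
  homogeneous_terms NG s y -> homogeneous_terms MG s (f \o y).
Proof. by move=> Hy j /Hy; apply: homf. Qed.

Lemma SG_submodule_preimage (S : pset M) :
  is_SG_submodule MG S -> is_SG_submodule NG (fun x => S (f x)).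
Proof.
move=> /(is_SG_submoduleP HMG)[[S0 [SB SZ]] closedS].
apply/(is_SG_submoduleP HNG); split; first split; [|split|].
- by rewrite raddf0.
- by move=> x x' Sx Sx'; rewrite raddfB; apply: SB.
- by move=> a x Sx; rewrite linearZ; apply: SZ.
- move=> s y Hy Sx k; rewrite hcomp_linear; apply: closedS.
    exact: homogeneous_terms_comp.
  by rewrite -raddf_sum.
Qed.

Lemma SG_submodule_image (S : pset N) :
  is_SG_submodule NG S -> is_SG_submodule MG (pimage f S).
Proof.
move=> /(is_SG_submoduleP HNG)[[S0 [SB SZ]] closedS].
apply/(is_SG_submoduleP HMG); split; first split; [|split|].
- by exists 0; rewrite ?raddf0.
- by move=> _ _ [x Sx ->] [x' Sx' ->]; exists (x - x'); [apply: SB | rewrite raddfB].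
- by move=> a _ [x Sx ->]; exists (a *: x); [apply: SZ | rewrite linearZ].
- move=> s z Hz [x Sx Ex] k.
  have [t [y [Hy Ey]]] := graded_decomposition HNG x.
  exists (hcomp t y k); first by apply: closedS; rewrite -?Ey.
  rewrite hcomp_linear; apply: (eq_hcomp HMG) => //.
    exact: homogeneous_terms_comp.
  by rewrite Ex Ey raddf_sum.
Qed.

End HomogeneousMaps.

Theorem mainTheorem2 (R : pzRingType) (RG : int -> pset R)
  (N M : lmodType R) (NG : int -> pset N) (MG : int -> pset M)
  (f : {linear N -> M}) (X : pset N) :
  is_SG_ring RG -> is_SG_module RG NG -> is_SG_module RG MG ->
  homogeneous NG MG f ->
  pimage f (SG_span NG X) = SG_span MG (pimage f X).
Proof.
move=> _ [HNG _] [HMG _] homf.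
apply: functional_extensionality => m; apply: propositional_extensionality; split.
- case=> x spanx -> S SGS fXS; apply: (spanx (fun x => S (f x))).
    exact/(SG_submodule_preimage HNG HMG homf).
  by move=> y Xy; apply: fXS; exists y.
- apply; first exact/(SG_submodule_image HNG HMG homf)/SG_span_SG_submodule.
  by move=> _ [x Xx ->]; exists x => // S _; apply.
Qed.
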